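(* Let $G=Q_8=\{\pm E,\pm I,\pm J,\pm K\}$ be the quaternion group ($IJ=-JI=K$, $JK=-KJ=I$, $KI=-IK=J$, $IJK=-E$). Then the class semigroup $\mathcal C(\mathcal B(G),\mathcal F(G))$ has exactly $18$ elements.
   Context: For a finite group $G$ (multiplicative, identity $1_G$), $\mathcal F(G)$ is the free abelian monoid with basis $G$ (sequences $S=g_1\boldsymbol{\cdot}\ldots\boldsymbol{\cdot}g_\ell$, operation $\boldsymbol{\cdot}$ = concatenation). $\pi(S)=\{g_{\tau(1)}\cdots g_{\tau(\ell)}:\tau\text{ a permutation of }[1,\ell]\}$, $\pi$ of the empty sequence is $\{1_G\}$, and $\mathcal B(G)=\{S\in\mathcal F(G):1_G\in\pi(S)\}$. For $S,S'\in\mathcal F(G)$, $S\sim S'$ means: for all $T\in\mathcal F(G)$, $S\boldsymbol{\cdot}T\in\mathcal B(G)\iff S'\boldsymbol{\cdot}T\in\mathcal B(G)$; this is a congruence and the class semigroup $\mathcal C(\mathcal B(G),\mathcal F(G))$ is the set of its equivalence classes. *)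

From HB Require Import structures.
From mathcomp Require Import all_boot all_fingroup all_solvable.
Set Implicit Arguments. Unset Strict Implicit. Unset Printing Implicit Defensive.

Local Open Scope group_scope.

Section ClassSemigroup.
Variable gT : finGroupType.

(* F(G): sequences over G, represented as lists taken up to permutation;
   concatenation is ++.  pi(S) = products of all orderings of S
   (the empty product is 1). *)
Definition pi_seq (S : seq gT) (g : gT) : Prop :=
  exists t : seq gT, perm_eq S t /\ \prod_(x <- t) x = g.

Definition in_B (S : seq gT) : Prop := pi_seq S 1.

Definition class_equiv (S S' : seq gT) : Prop :=
  forall T : seq gT, in_B (S ++ T) <-> in_B (S' ++ T).

Definition class_semigroup_card (n : nat) : Prop :=
  exists reps : seq (seq gT),
    size reps = n /\
    (forall i j, i < n -> j < n -> i <> j ->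
        ~ class_equiv (nth [::] reps i) (nth [::] reps j)) /\
    (forall S : seq gT, exists2 i, i < n & class_equiv S (nth [::] reps i)).
End ClassSemigroup.

From Stdlib Require Import Setoid.
From HB Require Import structures.
From mathcomp Require Import all_boot all_fingroup all_solvable.
Set Implicit Arguments. Unset Strict Implicit. Unset Printing Implicit Defensive.

(* Q_8 is modelled by pairs (s, (a, b)) standing for (-1)^s i^a j^b, whose
   second component is the image in Q_8/{1, -1} = (Z/2)^2.  Two elements commute
   iff their images are equal or one of them is trivial, and two that do not
   commute satisfy y x = - x y.  Hence S is a product-one sequence iff either its
   terms pairwise commute and its product is 1, or they do not and its image in
   (Z/2)^2 sums to 0: swapping a non-commuting adjacent pair flips the sign of
   the product.  So whether S T is a product-one sequence only depends on the
   signatures of S and T, i.e. the set of nontrivial images occurring in a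
   sequence together with its product.  Signatures form a finite monoid, and
   enumerating it shows that ~ has exactly 18 classes, already separated by
   appending sequences of length 2. *)

Local Open Scope group_scope.

Section IsomorphismInvariance.
Variables (aT rT : finGroupType) (f : {morphism [set: aT] >-> rT}).
Hypothesis isof : isom [set: aT] [set: rT] f.

Let injf : 'injm f := isom_inj isof.
Let g := invm injf.

Let g_cancel x : g (f x) = x.
Proof. by rewrite /g invmE ?inE. Qed.

Let f_cancel y : f (g y) = y.
Proof. by rewrite /g invmK // (isom_im isof) inE. Qed.

Let map_gK S : map f (map g S) = S.
Proof. by rewrite -map_comp (eq_map f_cancel) map_id. Qed.

Let prod_map S : \prod_(x <- map f S) x = f (\prod_(x <- S) x).
Proof. by rewrite big_map morph_prod // => x; rewrite inE. Qed.

Lemma in_B_morph S : in_B (map f S) <-> in_B S.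
Proof.
split=> [[t [eq_St prod_t]] | [t [eq_St prod_t]]].
- exists (map g t); split.
    by rewrite -[S]map_id -(eq_map g_cancel) map_comp perm_map.
  by rewrite -[LHS]g_cancel -prod_map map_gK prod_t -(morph1 f) g_cancel.
- by exists (map f t); rewrite perm_map // prod_map prod_t morph1.
Qed.

Lemma class_equiv_morph S S' : class_equiv (map f S) (map f S') <-> class_equiv S S'.
Proof.
split=> eqv T.
- by have := eqv (map f T); rewrite -!map_cat !in_B_morph.
- by rewrite -[T]map_gK -!map_cat !in_B_morph.
Qed.

Lemma class_semigroup_card_isom n :
  class_semigroup_card aT n -> class_semigroup_card rT n.
Proof.
case=> reps [size_reps [sep cover]].
have nth_reps i : nth [::] (map (map f) reps) i = map f (nth [::] reps i).
  have [lt_i | le_i] := ltnP i (size reps); first by rewrite (nth_map [::]).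
  by rewrite !nth_default ?size_map.
exists (map (map f) reps); split; first by rewrite size_map.
split=> [i j lt_i lt_j neq_ij | S].
  by rewrite !nth_reps class_equiv_morph; apply: sep.
have [i lt_i eqv] := cover (map g S).
by exists i; rewrite // nth_reps -[S]map_gK class_equiv_morph.
Qed.

End IsomorphismInvariance.

Lemma class_semigroup_card_isog (aT rT : finGroupType) n :
  [set: aT] \isog [set: rT] -> class_semigroup_card aT n -> class_semigroup_card rT n.
Proof. by case/isog_isom=> f isof; apply: (class_semigroup_card_isom isof). Qed.

Section SignatureCriterion.
Variables (gT : finGroupType) (V : eqType).
Variables (sig : seq gT -> V) (sig_mul : V -> V -> V) (sig_in_B : pred V).
Hypothesis sig_cat : forall S T, sig (S ++ T) = sig_mul (sig S) (sig T).
Hypothesis in_B_sig : forall S, in_B S <-> sig_in_B (sig S).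

Definition profile (W : seq V) (v : V) : bitseq := [seq sig_in_B (sig_mul v w) | w <- W].

Let in_B_cat S T : in_B (S ++ T) <-> sig_in_B (sig_mul (sig S) (sig T)).
Proof. by rewrite in_B_sig sig_cat. Qed.

Lemma class_equiv_profile S S' Ts :
  class_equiv S S' -> profile (map sig Ts) (sig S) = profile (map sig Ts) (sig S').
Proof.
move=> eqv; rewrite /profile -!map_comp; apply/eq_map=> T /=.
by apply/idP/idP=> /in_B_cat /eqv /in_B_cat.
Qed.

Variables (elems : seq gT) (sigs : seq V).
Hypothesis elemsP : forall x, x \in elems.
Hypothesis sigs_nil : sig [::] \in sigs.
Hypothesis sigs_closed :
  all (fun v => all (fun x => sig_mul (sig [:: x]) v \in sigs) elems) sigs.

Lemma sig_in_sigs T : sig T \in sigs.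
Proof.
elim: T => [|x T IH]; first exact: sigs_nil.
rewrite -cat1s sig_cat.
by move/allP: sigs_closed => /(_ _ IH) /allP; apply.
Qed.

Lemma profile_class_equiv S S' :
  profile sigs (sig S) = profile sigs (sig S') -> class_equiv S S'.
Proof.
move/eq_in_map=> eq_prof T; rewrite !in_B_cat.
by rewrite eq_prof ?sig_in_sigs.
Qed.

Lemma class_semigroup_card_profiles (reps tests : seq (seq gT)) :
  uniq [seq profile (map sig tests) (sig R) | R <- reps] ->
  all (fun v => profile sigs v \in [seq profile sigs (sig R) | R <- reps]) sigs ->
  class_semigroup_card gT (size reps).
Proof.
move=> separated covered; exists reps; split=> //; split.
  move=> i j lt_i lt_j neq_ij /(class_equiv_profile tests) /eqP.
  rewrite -!(nth_map [::] [::] (fun R => profile (map sig tests) (sig R))) //.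
  by rewrite nth_uniq ?size_map // => /eqP.
move=> S; have /mapP[R R_reps eq_prof] := allP covered _ (sig_in_sigs S).
exists (index R reps); first by rewrite index_mem.
by rewrite nth_index //; apply: profile_class_equiv.
Qed.

End SignatureCriterion.

Lemma perm_prodg_commute (G : monoidType) (S t : seq G) :
  {in S &, forall x y, commute x y} -> perm_eq S t ->
  \prod_(x <- S) x = \prod_(x <- t) x.
Proof.
elim: S t => [|x S IH] t comm_S eq_St.
  by move: eq_St; rewrite perm_sym => /perm_nilP ->.
have t_x : x \in t by rewrite -(perm_mem eq_St) mem_head.
case/splitPr: t_x eq_St => t1 t2 eq_St.
have eq_S : perm_eq S (t1 ++ t2).
  by rewrite -(perm_cons x) (perm_trans eq_St) // (perm_catCA t1 [:: x]).
have comm_x : commute x (\prod_(y <- t1) y).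
  rewrite big_seq; apply: commute_prod => y t1_y; apply: comm_S; first exact: mem_head.
  by rewrite (perm_mem eq_St) mem_cat t1_y.
rewrite big_cons (IH (t1 ++ t2)) //; last first.
  by move=> y z S_y S_z; apply: comm_S; rewrite inE ?S_y ?S_z orbT.
by rewrite !big_cat big_cons /= mulgA comm_x -mulgA.
Qed.

Lemma in_B_commute (gT : finGroupType) (S : seq gT) :
  {in S &, forall x y, commute x y} -> in_B S <-> \prod_(x <- S) x = 1.
Proof.
move=> comm_S; split=> [[t [eq_St prod_t]] | prod_S]; last by exists S.
by rewrite (perm_prodg_commute comm_S eq_St).
Qed.

Definition v4 := (bool * bool)%type.
Definition v4add (u v : v4) : v4 := (u.1 (+) v.1, u.2 (+) v.2).
Notation V0 := (false, false).

Lemma v4addA : associative v4add. Proof. by do 3!case=> [[] []]. Qed.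
Lemma v4addC : commutative v4add. Proof. by do 2!case=> [[] []]. Qed.
Lemma v4add0l : left_id V0 v4add. Proof. by case=> [[] []]. Qed.
HB.instance Definition _ := Monoid.isComLaw.Build v4 V0 v4add v4addA v4addC v4add0l.

(* The sign of a product comes from i^2 = j^2 = -1 and j i = - i j. *)
Definition q8 := (bool * v4)%type.
HB.instance Definition _ := Finite.on q8.

Definition q8_sign (u v : v4) : bool := [&& u.1 & v.1] (+) [&& u.2 & v.2] (+) [&& u.2 & v.1].
Definition q8_mul (x y : q8) : q8 := (x.1 (+) y.1 (+) q8_sign x.2 y.2, v4add x.2 y.2).
Definition q8_one : q8 := (false, V0).
Definition q8_inv (x : q8) : q8 := (x.1 (+) (x.2 != V0), x.2).

Lemma q8_mulA : associative q8_mul. Proof. by do 3!case=> [[] [[] []]]. Qed.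
Lemma q8_mul1l : left_id q8_one q8_mul. Proof. by case=> [[] [[] []]]. Qed.
Lemma q8_mulVl : left_inverse q8_one q8_inv q8_mul. Proof. by case=> [[] [[] []]]. Qed.
HB.instance Definition _ := Finite_isGroup.Build q8 q8_mulA q8_mul1l q8_mulVl.

Definition qz : q8 := (true, V0).
Definition qi : q8 := (false, (true, false)).
Definition qj : q8 := (false, (false, true)).
Definition qk : q8 := (false, (true, true)).

Lemma q8_commuteE (x y : q8) : (x * y == y * x) = [|| x.2 == V0, y.2 == V0 | x.2 == y.2].
Proof. by case: x y => [[] [[] []]] [[] [[] []]]. Qed.

Lemma q8_anticommute (x y : q8) : x * y != y * x -> y * x = qz * (x * y).
Proof. by case: x y => [[] [[] []]] [[] [[] []]]. Qed.

Lemma q8_ab_eq0 (x : q8) : x.2 = V0 -> x = 1 \/ x = qz.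
Proof. by case: x => [[] [[] []]] //; auto. Qed.

Lemma q8_ab_prod (S : seq q8) : (\prod_(x <- S) x).2 = \big[v4add/V0]_(x <- S) x.2.
Proof. exact: (big_morph snd (id1 := V0) (op1 := v4add)). Qed.

Lemma q8_ab_prod_perm (S t : seq q8) :
  perm_eq S t -> (\prod_(x <- S) x).2 = (\prod_(x <- t) x).2.
Proof. by move=> eq_St; rewrite !q8_ab_prod (perm_big _ eq_St). Qed.

Definition q8_commuting (S : seq q8) : bool := all2rel (fun x y => x * y == y * x) S.

Lemma in_B_q8_noncommuting (S : seq q8) :
  ~~ q8_commuting S -> in_B S <-> (\prod_(x <- S) x).2 = V0.
Proof.
move=> noncomm_S; split=> [[t [eq_St prod_t]] | ab_S].
  by rewrite (q8_ab_prod_perm eq_St) prod_t.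
have [x S_x /allPn[y S_y noncomm_xy]] := allPn noncomm_S.
have neq_yx : y != x by apply: contraNneq noncomm_xy => ->.
have eq_SxR := perm_to_rem S_x.
have Rx_y : y \in rem x S by move: S_y; rewrite (perm_mem eq_SxR) inE (negPf neq_yx).
set R := rem y (rem x S).
have eq_Sxy : perm_eq S [:: x, y & R].
  by rewrite (perm_trans eq_SxR) // perm_cons perm_to_rem.
have eq_Syx : perm_eq S [:: y, x & R].
  by rewrite (perm_trans eq_Sxy) // (perm_catCA [:: x] [:: y]).
have := q8_ab_prod_perm eq_Sxy; rewrite ab_S => /esym/q8_ab_eq0[prod_xy | prod_xy].
  by exists [:: x, y & R].
exists [:: y, x & R]; split=> //.
rewrite !big_cons in prod_xy *.
by rewrite mulgA (q8_anticommute noncomm_xy) -!mulgA prod_xy.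
Qed.

Definition v4_nonzero : seq v4 := [:: (true, false); (false, true); (true, true)].

(* Filtering a fixed list keeps the encoding canonical: equal sets of images
   give equal lists. *)
Definition q8_dirs (S : seq q8) : seq v4 := [seq v <- v4_nonzero | v \in map snd S].

Lemma mem_v4_nonzero v : (v \in v4_nonzero) = (v != V0).
Proof. by case: v => [[] []]. Qed.

Lemma mem_q8_dirs S v : (v \in q8_dirs S) = (v != V0) && (v \in map snd S).
Proof. by rewrite mem_filter mem_v4_nonzero andbC. Qed.

Lemma q8_commuting_dirs S : q8_commuting S = (size (q8_dirs S) <= 1).
Proof.
have uniq_dirs : uniq (q8_dirs S) by rewrite filter_uniq.
rewrite -(card_uniqP uniq_dirs).
apply/allrelP/card_le1_eqP=> [comm_S u v | eq_dirs x y S_x S_y].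
  rewrite !mem_q8_dirs => /andP[nz_u /mapP[x S_x eq_u]] /andP[nz_v /mapP[y S_y eq_v]].
  move: (comm_S y x S_y S_x); rewrite q8_commuteE -eq_u -eq_v.
  by rewrite (negPf nz_u) (negPf nz_v) => /eqP.
rewrite q8_commuteE; have [// | nz_x] := eqVneq x.2 V0.
have [// | nz_y] := eqVneq y.2 V0.
by apply/orP; right; apply/eqP/eq_dirs; rewrite mem_q8_dirs ?nz_x ?nz_y map_f.
Qed.

Definition q8_sig (S : seq q8) : seq v4 * q8 := (q8_dirs S, foldr *%g 1 S).

Definition q8_sig_mul (u w : seq v4 * q8) : seq v4 * q8 :=
  ([seq v <- v4_nonzero | (v \in u.1) || (v \in w.1)], u.2 * w.2).

Definition q8_sig_in_B (u : seq v4 * q8) : bool :=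
  if size u.1 <= 1 then u.2 == 1 else u.2.2 == V0.

Lemma q8_sig_cat S T : q8_sig (S ++ T) = q8_sig_mul (q8_sig S) (q8_sig T).
Proof.
rewrite /q8_sig_mul /q8_sig !foldrE big_cat; congr (_, _).
rewrite {1}/q8_dirs; apply: eq_in_filter => v; rewrite mem_v4_nonzero => nz_v /=.
by rewrite !mem_q8_dirs nz_v map_cat mem_cat.
Qed.

Lemma in_B_q8_sig S : in_B S <-> q8_sig_in_B (q8_sig S).
Proof.
rewrite /q8_sig_in_B /= foldrE -q8_commuting_dirs.
case: ifPn => [/allrelP comm_S | noncomm_S].
  have commute_S : {in S &, forall x y, commute x y} by move=> x y *; apply/eqP/comm_S.
  by rewrite (in_B_commute commute_S); split=> /eqP.
by rewrite (in_B_q8_noncommuting noncomm_S); split=> /eqP.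
Qed.

Definition q8_elems : seq q8 :=
  [seq (s, v) | s <- [:: false; true], v <- V0 :: v4_nonzero].

Lemma mem_q8_elems x : x \in q8_elems.
Proof. by case: x => [[] [[] []]]. Qed.

Definition q8_sig_step (vs : seq (seq v4 * q8)) : seq (seq v4 * q8) :=
  undup (vs ++ [seq q8_sig_mul (q8_sig [:: x]) v | x <- q8_elems, v <- vs]).

Definition q8_sigs : seq (seq v4 * q8) := iter 5 q8_sig_step [:: q8_sig [::]].

Lemma q8_sigs_nil : q8_sig [::] \in q8_sigs.
Proof. by vm_compute. Qed.

Lemma q8_sigs_closed :
  all (fun v => all (fun x => q8_sig_mul (q8_sig [:: x]) v \in q8_sigs) q8_elems) q8_sigs.
Proof. by vm_compute. Qed.

Definition q8_reps : seq (seq q8) :=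
  [:: [::]; [:: qi]; [:: qz]; [:: qz * qi]; [:: qj]; [:: qk]; [:: qz * qj]; [:: qz * qk];
      [:: qi; qi]; [:: qi; qz * qi]; [:: qi; qj]; [:: qi; qk]; [:: qj; qj]; [:: qj; qk];
      [:: qj; qz * qj]; [:: qk; qk]; [:: qk; qz * qk]; [:: qi; qj; qk]].

Definition q8_tests : seq (seq q8) := [seq [:: x; y] | x <- q8_elems, y <- q8_elems].

Lemma q8_reps_separated :
  uniq [seq profile q8_sig_mul q8_sig_in_B (map q8_sig q8_tests) (q8_sig R) | R <- q8_reps].
Proof. by vm_compute. Qed.

Lemma q8_reps_cover :
  all (fun v => profile q8_sig_mul q8_sig_in_B q8_sigs v
                  \in [seq profile q8_sig_mul q8_sig_in_B q8_sigs (q8_sig R) | R <- q8_reps])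
      q8_sigs.
Proof. by vm_compute. Qed.

Lemma class_semigroup_card_q8 : class_semigroup_card q8 18.
Proof.
exact: (class_semigroup_card_profiles q8_sig_cat in_B_q8_sig mem_q8_elems
          q8_sigs_nil q8_sigs_closed q8_reps_separated q8_reps_cover).
Qed.

Lemma q8_normal_form (x : q8) : x = qi ^+ (2 * x.1 + x.2.1) * qj ^+ x.2.2.
Proof. by case: x => [[] [[] []]]. Qed.

Lemma q8_isog_Q8 : [set: q8] \isog 'Q_8.
Proof.
change ([set: q8] \isog [set: 'Q_(2 ^ 3)]).
apply/(isoGrpP [set: q8]%G (Grp_quaternion (n := 3) isT)); split.
  by rewrite card_quaternion // cardsT (card_prod bool v4) card_prod !card_bool.
apply/existsP; exists (qi, qj); apply/and4P; split=> //=.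
rewrite eqEsubset subsetT; apply/subsetP=> x _.
rewrite (q8_normal_form x) groupM ?groupX //.
  by rewrite (subsetP (joing_subl _ _)) ?cycle_id.
by rewrite (subsetP (joing_subr _ _)) ?cycle_id.
Qed.

Theorem mainTheorem10 : class_semigroup_card (quaternion_gtype 8) 18.
Proof. exact: class_semigroup_card_isog q8_isog_Q8 class_semigroup_card_q8. Qed.
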